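(* Let $G$ be a non-complete double-critical $k$-chromatic graph. For any vertex $x$ of $G$ that is not adjacent to all the other vertices of $G$, $\chi(G_x)\le k-3$.
   Context: All graphs are finite and simple. A graph $G$ is (vertex-)critical if $\chi(G-v)<\chi(G)$ for every vertex $v\in V(G)$. A critical graph $G$ is double-critical if $\chi(G-x-y)\le\chi(G)-2$ for every edge $xy\in E(G)$. For a vertex $x$, $G_x:=G[N(x)]$ denotes the subgraph induced by the neighbourhood of $x$. *)

(* A finite simple graph is a symmetric irreflexive
   relation e on a finType T.  Subgraphs considered are induced subgraphs
   G[S] for S : {set T}. *)
From mathcomp Require Import all_boot.
Set Implicit Arguments. Unset Strict Implicit. Unset Printing Implicit Defensive.

(* G[S] admits a proper colouring with k colours (loops are ignored, which
   is harmless since the graphs considered are irreflexive). *)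
Definition colorable (T : finType) (e : rel T) (S : {set T}) (k : nat) : bool :=
  [exists f : {ffun T -> 'I_k},
     [forall x in S, forall y in S, ((x != y) && e x y) ==> (f x != f y)]].

Lemma colorable_exists (T : finType) (e : rel T) (S : {set T}) :
  exists k, colorable e S k.
Proof.
exists #|T|; apply/existsP; exists [ffun x => enum_rank x].
apply/forall_inP => x _; apply/forall_inP => y _; apply/implyP => /andP [nxy _].
rewrite !ffunE; apply: contra nxy => /eqP /enum_rank_inj ->; exact: eqxx.
Qed.

Definition chi (T : finType) (e : rel T) (S : {set T}) : nat :=
  ex_minn (colorable_exists e S).

Definition critical (T : finType) (e : rel T) : Prop :=
  forall v : T, chi e ([set: T] :\ v) < chi e [set: T].

(* G is double-critical: critical and chi(G - x - y) <= chi(G) - 2 for every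
   edge xy (stated without truncated subtraction). *)
Definition double_critical (T : finType) (e : rel T) : Prop :=
  critical e /\
  forall x y : T, e x y -> (chi e ([set: T] :\ x :\ y)).+2 <= chi e [set: T].

Definition complete (T : finType) (e : rel T) : Prop :=
  forall x y : T, x != y -> e x y.

(* vertex set of G_x = G[N(x)] *)
Definition nbhd (T : finType) (e : rel T) (x : T) : {set T} := [set y | e x y].

(* Let y be a vertex distinct from and not adjacent to x.  If some neighbour w
   of y is not adjacent to x, colour G - y - w with at most k - 2 colours; x
   and all of N(x) survive, and no vertex of N(x) uses the colour of x, so
   chi(G_x) <= k - 3.  Otherwise N(y) is contained in N(x): for any neighbour
   w of y, a colouring of G - y - w extends to y with the colour of x, and to
   w with one fresh colour, giving chi(G) <= k - 1, a contradiction.  In a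
   critical graph on at least two vertices no vertex is isolated, which
   provides the edges needed in both cases. *)
From mathcomp Require Import all_boot.
From mathcomp Require Import zify.
Set Implicit Arguments. Unset Strict Implicit. Unset Printing Implicit Defensive.

Section Colourings.

Variables (T : finType) (e : rel T).

Lemma colorableP (S : {set T}) n :
  reflect (exists f : T -> 'I_n,
             {in S &, forall a b, a != b -> e a b -> f a != f b})
          (colorable e S n).
Proof.
apply: (iffP existsP) => [[f /forall_inP fP] | [f fP]].
  exists f => a b aS bS nab eab.
  by have /forall_inP /(_ b bS) /implyP := fP a aS; apply; rewrite nab.
exists [ffun v => f v]; apply/forall_inP => a aS; apply/forall_inP => b bS.
by apply/implyP => /andP[nab eab]; rewrite !ffunE; apply: fP.
Qed.

Lemma chi_colorable (S : {set T}) : colorable e S (chi e S).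
Proof. by rewrite /chi; case: ex_minnP. Qed.

Lemma chi_min (S : {set T}) n : colorable e S n -> chi e S <= n.
Proof. by rewrite /chi; case: ex_minnP => m _; apply. Qed.

Lemma colorable_edge_gt1 (S : {set T}) a b n :
  a \in S -> b \in S -> a != b -> e a b -> colorable e S n -> 1 < n.
Proof.
move=> aS bS nab eab /colorableP[f fP]; have := fP a b aS bS nab eab.
by case: n f {fP} => [|[|n]] f; [case: (f a) | rewrite !ord1 | ].
Qed.

Lemma colorable_setU1_fresh (S : {set T}) w n :
  colorable e S n -> colorable e (w |: S) n.+1.
Proof.
move=> /colorableP[f fP]; apply/colorableP.
exists (fun v => if v == w then ord_max else lift ord_max (f v)).
move=> a b aS bS nab eab.
have [<- | aw] := eqVneq a w; first by rewrite ifN_eq ?neq_lift // eq_sym.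
have [_ | bw] := eqVneq b w; first by rewrite eq_sym neq_lift.
move: aS bS; rewrite !inE (negPf aw) (negPf bw) => aS bS.
by rewrite (inj_eq lift_inj) fP.
Qed.

Hypothesis e_sym : symmetric e.

Lemma colorable_setU1_dominated (S : {set T}) x y n :
  x \in S -> ~~ e x y -> {in S, forall u, e y u -> e x u} ->
  colorable e S n -> colorable e (y |: S) n.
Proof.
move=> xS nexy dom /colorableP[f fP]; apply/colorableP.
pose g v := if v == y then f x else f v.
have gy u : u \in S -> u != y -> e y u -> g y != g u.
  move=> uS uy eyu; rewrite /g eqxx ifN_eq //.
  by apply: fP => //; [apply: contraNneq nexy => ->; rewrite e_sym | exact: dom].
have inS v : v \in y |: S -> v != y -> v \in S.
  by case/setU1P => [-> | //]; rewrite eqxx.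
exists g => a b aS bS nab eab.
have [ay | ay] := eqVneq a y.
  subst a; have yb : b != y by rewrite eq_sym.
  by apply: gy => //; apply: inS.
have [by' | by'] := eqVneq b y.
  subst b; rewrite eq_sym e_sym in eab *.
  by apply: gy => //; apply: inS.
by rewrite /g !ifN_eq //; apply: fP (inS a aS ay) (inS b bS by') nab eab.
Qed.

Hypothesis e_irr : irreflexive e.

(* The colour of x does not occur on N(x); [unlift] renumbers the others. *)
Lemma colorable_nbhd (S : {set T}) x n :
  x \in S -> nbhd e x \subset S -> colorable e S n.+2 ->
  colorable e (nbhd e x) n.+1.
Proof.
move=> xS /subsetP NxS /colorableP[f fP]; apply/colorableP.
have fNx v : v \in nbhd e x -> f x != f v.
  move=> vN; have exv : e x v by rewrite inE in vN.
  have xv : x != v by apply: contraTneq exv => <-; rewrite e_irr.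
  exact: fP xS (NxS v vN) xv exv.
exists (fun v => odflt ord0 (unlift (f x) (f v))) => a b aN bN nab eab.
have := fP a b (NxS a aN) (NxS b bN) nab eab.
case: unliftP (fNx a aN) => [ja -> _ | ->]; last by rewrite eqxx.
case: unliftP (fNx b bN) => [jb -> _ /= | ->]; last by rewrite eqxx.
by apply: contra_neq => ->.
Qed.

(* The edge xz is needed: there is no colouring with 0 colours, so even the
   empty vertex set has chi = 1. *)
Lemma chi_nbhd_lt (S : {set T}) x z :
  x \in S -> nbhd e x \subset S -> e x z -> chi e (nbhd e x) < chi e S.
Proof.
move=> xS NxS exz.
have zS : z \in S by apply: (subsetP NxS); rewrite inE.
have xz : x != z by apply: contraTneq exz => ->; rewrite e_irr.
have := colorable_edge_gt1 xS zS xz exz (chi_colorable S).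
by case: (chi e S) (chi_colorable S) => [|[|n]] // /(colorable_nbhd xS NxS) /chi_min.
Qed.

Lemma critical_has_neighbor u v : critical e -> u != v -> exists w, e v w.
Proof.
move=> crit uv; apply/existsP; apply: contraT; rewrite negb_exists => /forallP iso.
have uS : u \in [set: T] :\ v by rewrite !inE uv.
have : colorable e (v |: ([set: T] :\ v)) (chi e ([set: T] :\ v)).
  apply: colorable_setU1_dominated uS _ _ (chi_colorable _); first by rewrite e_sym.
  by move=> w _; rewrite (negbTE (iso w)).
by rewrite setD1K ?inE // => /chi_min; rewrite leqNgt crit.
Qed.

End Colourings.

Theorem proposition13 (T : finType) (e : rel T)
  (e_sym : symmetric e) (e_irr : irreflexive e) (k : nat)
  (hk : chi e [set: T] = k)
  (hdc : double_critical e)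
  (hnc : ~ complete e)
  (x : T) (hx : exists2 y : T, y != x & ~~ e x y) :
  chi e (nbhd e x) + 3 <= k.
Proof.
case: hdc => crit dcrit; case: hx => y yx nexy.
have xy : x != y by rewrite eq_sym.
have xS w : e y w -> x \in [set: T] :\ w :\ y.
  by move=> eyw; rewrite !inE xy andbT; apply: contraNneq nexy => ->; rewrite e_sym.
have chiS w : e y w -> (chi e ([set: T] :\ w :\ y)).+2 <= k.
  by rewrite -hk e_sym; apply: dcrit.
have [w /andP[eyw nexw] | dom] := pickP (fun w => e y w && ~~ e x w).
  have NxS : nbhd e x \subset [set: T] :\ w :\ y.
    apply/subsetP => z; rewrite !inE andbT => exz.
    by apply/andP; split; [apply: contraNneq nexy | apply: contraNneq nexw] => <-.
  have [z exz] := critical_has_neighbor e_sym crit yx.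
  have := chi_nbhd_lt e_irr (xS w eyw) NxS exz; have := chiS w eyw; lia.
have [w eyw] := critical_has_neighbor e_sym crit xy.
have NyNx : {in [set: T] :\ w :\ y, forall u, e y u -> e x u}.
  by move=> u _ eyu; move: (dom u); rewrite eyu; case: (e x u).
have := colorable_setU1_fresh w
  (colorable_setU1_dominated e_sym (xS w eyw) nexy NyNx (chi_colorable e _)).
have yw : y != w by apply: contraTneq eyw => <-; rewrite e_irr.
rewrite !setD1K ?inE ?yw // => /chi_min; have := chiS w eyw; lia.
Qed.
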